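(* Assume (F1)–(F3) and let $f_0\in C^1([0,1])$ be non-increasing with $f_0(w)\le f(w)$ for $0\le w\le1$, $f_0(0)>1$, $f_0(1)=0$, and such that $1-w=f_0(w)$ has exactly one solution in $(0,1)$. Let $c^{(0)}$ be the unique value of $c$ for which the non-delayed problem $w''+cw'+w(1-w-f_0(w))=0$, $w(-\infty)=1$, $w(+\infty)=0$ has a solution. If, for some $\tau\ge0$ and some $c>0$, problem (P) has a monotonically decreasing solution, then $c\le c^{(0)}$.
   Context: $f:\mathbb R\to\mathbb R$ is $C^4$ with bounded derivatives and satisfies: (F1) $f(w)>0$ for $0\le w<1$, $f(1)=0$, $f'(1)>-1$; (F2) $f(0)>1$, $f'(0)>0$, and $f(w)>1$ for $0\le w<w_*$ for some $w_*\in(0,1)$; (F3) the equation $f(w)=1-w$ has exactly one solution $w_0$ in $(0,1)$, and $f'(w_0)<-1$. Problem (P) for given $\tau\ge0$, $c\in\mathbb R$: find $w\in C^2(\mathbb R)$ with $w''(x)+cw'(x)+w(x)\big(1-w(x)-f(w(x+c\tau))\big)=0$ for all $x$, and $w(-\infty)=1$, $w(+\infty)=0$. *)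

From Stdlib Require Import Reals Lra.
Open Scope R_scope.

Definition bounded_fun (g : R -> R) : Prop :=
  exists M : R, forall x : R, Rabs (g x) <= M.

Definition C2_with (w w1 w2 : R -> R) : Prop :=
  (forall x, derivable_pt_lim w x (w1 x)) /\
  (forall x, derivable_pt_lim w1 x (w2 x)) /\
  continuity w2.

Definition lim_minus_inf (w : R -> R) (l : R) : Prop :=
  forall eps, eps > 0 -> exists M, forall x, x <= M -> Rabs (w x - l) < eps.
Definition lim_plus_inf (w : R -> R) (l : R) : Prop :=
  forall eps, eps > 0 -> exists M, forall x, x >= M -> Rabs (w x - l) < eps.

Definition C1_on_01 (g : R -> R) : Prop :=
  exists g' : R -> R,
    (forall x, 0 <= x <= 1 ->
       limit1_in (fun y => (g y - g x) / (y - x))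
                 (fun y => 0 <= y <= 1 /\ y <> x) (g' x) x) /\
    (forall x, 0 <= x <= 1 ->
       limit1_in g' (fun y => 0 <= y <= 1) (g' x) x).

Definition solves_P (f : R -> R) (tau c : R) (w : R -> R) : Prop :=
  exists w1 w2 : R -> R,
    C2_with w w1 w2 /\
    (forall x, w2 x + c * w1 x + w x * (1 - w x - f (w (x + c * tau))) = 0) /\
    lim_minus_inf w 1 /\ lim_plus_inf w 0.

Definition solves_nondelayed (f0 : R -> R) (c : R) (w : R -> R) : Prop :=
  exists w1 w2 : R -> R,
    C2_with w w1 w2 /\
    (forall x, 0 <= w x <= 1) /\
    (forall x, w2 x + c * w1 x + w x * (1 - w x - f0 (w x)) = 0) /\
    lim_minus_inf w 1 /\ lim_plus_inf w 0.

From Stdlib Require Import Reals Ranalysis5 Lra Classical ClassicalEpsilon.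
From Coquelicot Require Import Coquelicot.
Open Scope R_scope.

(* Suppose c > c0 and put g(s) = s (1 - s - f0 s), G' = g, G 0 = 0.  Since w decreases,
   f (w (x + c tau)) >= f0 (w (x + c tau)) >= f0 (w x), so w'' + c w' + g(w) = h >= 0.
   The energy w'^2/2 + G(w) then decreases from G 1 to G 0 = 0, hence G 1 > 0.  This
   forces g > 0 on (r1, 1), where r1 is the zero of 1 - s - f0 s, and c0 > 0; by the
   same energy argument the non-delayed front u has u' < 0 wherever 0 < u < 1.  In the
   phase plane compare the slopes Z(x) = - w'(x) + u'(u^-1 (w x)): Z can only cross 0
   downwards, and Z - (c - c0) w is nonincreasing wherever g(w) Z >= 0.  Following w from
   the level r1 towards 0, resp. towards 1, gives Z > 0 and Z < 0 where w = r1. *)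

Lemma MVT_lower_bound (F F' : R -> R) a b m :
  a <= b -> (forall x, a <= x <= b -> derivable_pt_lim F x (F' x)) ->
  (forall x, a <= x <= b -> m <= F' x) -> m * (b - a) <= F b - F a.
Proof.
  intros Hab HD Hm. destruct (Req_dec a b) as [<-|Hne]; [lra|].
  destruct (MVT_cor2 F F' a b) as [x [-> Hx]]; [lra|exact HD|].
  assert (m <= F' x) by (apply Hm; lra). nra.
Qed.

Lemma MVT_upper_bound (F F' : R -> R) a b m :
  a <= b -> (forall x, a <= x <= b -> derivable_pt_lim F x (F' x)) ->
  (forall x, a <= x <= b -> F' x <= m) -> F b - F a <= m * (b - a).
Proof.
  intros Hab HD Hm. destruct (Req_dec a b) as [<-|Hne]; [lra|].
  destruct (MVT_cor2 F F' a b) as [x [-> Hx]]; [lra|exact HD|].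
  assert (F' x <= m) by (apply Hm; lra). nra.
Qed.

Lemma derive_nonpos_interv (F F' : R -> R) a b :
  a <= b -> (forall x, a <= x <= b -> derivable_pt_lim F x (F' x)) ->
  (forall x, a <= x <= b -> F' x <= 0) -> F b <= F a.
Proof.
  intros Hab HD HF. pose proof (MVT_upper_bound F F' a b 0 Hab HD HF). lra.
Qed.

Lemma derive_nonneg_interv (F F' : R -> R) a b :
  a <= b -> (forall x, a <= x <= b -> derivable_pt_lim F x (F' x)) ->
  (forall x, a <= x <= b -> 0 <= F' x) -> F a <= F b.
Proof.
  intros Hab HD HF. pose proof (MVT_lower_bound F F' a b 0 Hab HD HF). lra.
Qed.

Lemma derive_neg_interv (F F' : R -> R) a b :
  a < b -> (forall x, a <= x <= b -> derivable_pt_lim F x (F' x)) ->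
  (forall x, a <= x <= b -> F' x < 0) -> F b < F a.
Proof.
  intros Hab HD HF.
  destruct (MVT_cor2 F F' a b) as [x [Heq Hx]]; [lra|exact HD|].
  assert (F' x < 0) by (apply HF; lra). nra.
Qed.

Lemma derive_abs_bound_interv (F F' : R -> R) a b K :
  a <= b -> (forall x, a <= x <= b -> derivable_pt_lim F x (F' x)) ->
  (forall x, a <= x <= b -> Rabs (F' x) <= K) -> Rabs (F b - F a) <= K * (b - a).
Proof.
  intros Hab HD HK. apply Rabs_le. split.
  - enough (- K * (b - a) <= F b - F a) by lra.
    apply (MVT_lower_bound F F'); auto. intros x Hx. apply (Rabs_le_between (F' x) K), HK, Hx.
  - apply (MVT_upper_bound F F'); auto. intros x Hx. apply (Rabs_le_between (F' x) K), HK, Hx.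
Qed.

Lemma derive_zero_const (F F' : R -> R) a b :
  a <= b -> (forall x, a <= x <= b -> derivable_pt_lim F x (F' x)) ->
  (forall x, a <= x <= b -> F' x = 0) -> F b = F a.
Proof.
  intros Hab HD HF. apply Rle_antisym.
  - apply (derive_nonpos_interv F F'); auto. intros x Hx. rewrite HF; lra.
  - apply (derive_nonneg_interv F F'); auto. intros x Hx. rewrite HF; lra.
Qed.

Lemma derivable_pt_lim_sign (F : R -> R) x l :
  derivable_pt_lim F x l -> l <> 0 -> exists eta, 0 < eta /\ forall h, 0 < h < eta ->
  0 < (F (x + h) - F x) * l /\ (F (x - h) - F x) * l < 0.
Proof.
  intros HD Hl.
  assert (Hl2 : 0 < Rabs l / 2) by (pose proof (Rabs_pos_lt l Hl); lra).
  destruct (HD _ Hl2) as [[d Hd] Hdiff]; simpl in Hdiff.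
  exists d. split; [exact Hd|]. intros h Hh.
  (* both difference quotients are within |l|/2 of l, hence of the sign of l *)
  assert (Q : forall k, k <> 0 -> Rabs k < d -> 0 < (F (x + k) - F x) / k * l).
  { intros k Hk Hkd. specialize (Hdiff k Hk Hkd).
    apply Rabs_def2 in Hdiff. destruct (Rlt_or_le 0 l).
    - rewrite Rabs_right in Hdiff by lra. apply Rmult_lt_0_compat; lra.
    - rewrite Rabs_left in Hdiff by lra.
      replace ((F (x + k) - F x) / k * l) with (- ((F (x + k) - F x) / k) * - l) by ring.
      apply Rmult_lt_0_compat; lra. }
  assert (Qp := Q h ltac:(lra) ltac:(rewrite Rabs_right; lra)).
  assert (Qm := Q (- h) ltac:(lra) ltac:(rewrite Rabs_Ropp, Rabs_right; lra)).
  replace (x + - h) with (x - h) in Qm by ring.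
  split.
  - replace ((F (x + h) - F x) * l) with (h * ((F (x + h) - F x) / h * l)) by (field; lra).
    apply Rmult_lt_0_compat; lra.
  - replace ((F (x - h) - F x) * l) with (- h * ((F (x - h) - F x) / - h * l)) by (field; lra).
    nra.
Qed.

Lemma derivable_pt_lim_sign_close (F : R -> R) x l eta :
  derivable_pt_lim F x l -> l <> 0 -> 0 < eta ->
  exists h, 0 < h < eta /\ 0 < (F (x + h) - F x) * l /\ (F (x - h) - F x) * l < 0.
Proof.
  intros HD Hl Heta. destruct (derivable_pt_lim_sign F x l HD Hl) as [d [Hd Hh]].
  exists (Rmin d eta / 2).
  assert (0 < Rmin d eta) by (apply Rmin_glb_lt; lra).
  pose proof (Rmin_l d eta). pose proof (Rmin_r d eta).
  split; [lra|]. apply Hh. lra.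
Qed.

Lemma derive_zero_at_local_min (F : R -> R) x l a b :
  a < x < b -> (forall y, a < y < b -> F x <= F y) -> derivable_pt_lim F x l -> l = 0.
Proof.
  intros Hx Hmin HD. exact (deriv_minimum F a b x (exist _ l HD) (proj1 Hx) (proj2 Hx)
    (fun y Hay Hyb => Hmin y (conj Hay Hyb))).
Qed.

Lemma derive_nonpos_of_decreasing (F F' : R -> R) :
  decreasing F -> (forall x, derivable_pt_lim F x (F' x)) -> forall x, F' x <= 0.
Proof.
  intros Hdec HD x.
  exact (nonpos_derivative_0 F (fun y => exist _ (F' y) (HD y)) Hdec x).
Qed.

Lemma continuity_pt_eps (F : R -> R) x : continuity_pt F x ->
  forall eps, 0 < eps -> exists del, 0 < del /\
    forall y, Rabs (y - x) < del -> Rabs (F y - F x) < eps.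
Proof.
  intros HF eps Heps. destruct (HF eps Heps) as [del [Hdel Hy]].
  exists del. split; [exact Hdel|]. intros y Hyx.
  destruct (Req_dec y x) as [->|Hne].
  - rewrite Rminus_eq_0, Rabs_R0. exact Heps.
  - apply (Hy y). split; [split; [exact I|auto]|exact Hyx].
Qed.

Lemma IVT_decr (F : R -> R) a b v : a < b ->
  (forall x, a <= x <= b -> continuity_pt F x) -> v < F a -> F b < v ->
  exists t, a <= t <= b /\ F t = v.
Proof.
  intros Hab HF Ha Hb.
  destruct (IVT_interv (fun y => v - F y) a b) as [t [Ht Hft]]; try lra.
  - intros x Hx. apply continuity_pt_minus; [apply continuity_pt_const; now intros ? ?|auto].
  - exists t. split; [exact Ht|lra].
Qed.

Lemma IVT_incr (F : R -> R) a b v : a < b ->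
  (forall x, a <= x <= b -> continuity_pt F x) -> F a < v -> v < F b ->
  exists t, a <= t <= b /\ F t = v.
Proof.
  intros Hab HF Ha Hb.
  destruct (IVT_decr (fun y => - F y) a b (- v)) as [t [Ht Hft]]; try lra.
  - intros x Hx. apply continuity_pt_opp, HF, Hx.
  - exists t. split; [exact Ht|lra].
Qed.

Lemma first_zero_after_neg (p : R -> R) a t :
  a < t -> (forall x, a <= x <= t -> continuity_pt p x) -> p a < 0 -> 0 <= p t ->
  exists z, a < z <= t /\ p z = 0 /\ forall y, a <= y < z -> p y < 0.
Proof.
  intros Hat Hc Ha Ht.
  (* z is the end of the maximal interval [a, z) on which p stays negative *)
  set (E := fun s => a <= s <= t /\ forall y, a <= y <= s -> p y < 0).
  assert (Ea : E a) by (split; [lra|intros y Hy; replace y with a by lra; exact Ha]).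
  destruct (completeness E) as [z [Hub Hlub]];
    [exists t; intros s [Hs _]; lra|exists a; exact Ea|].
  assert (Haz : a <= z) by (apply Hub, Ea).
  assert (Hzt : z <= t) by (apply Hlub; intros s [Hs _]; lra).
  assert (Hneg : forall y, a <= y < z -> p y < 0).
  { intros y Hy. destruct (classic (exists s, E s /\ y <= s)) as [[s [[_ Hs] Hys]]|Hno].
    - apply Hs. lra.
    - assert (z <= y); [|lra]. apply Hlub. intros s Es.
      destruct (Rle_or_lt s y); [lra|]. exfalso. apply Hno. exists s. split; [exact Es|lra]. }
  destruct (Rlt_or_le (p z) 0) as [Hz|Hz].
  - (* p stays negative a little beyond z, contradicting maximality *)
    exfalso. assert (Hzt' : z < t) by (destruct (Req_dec z t) as [->|]; lra).
    destruct (continuity_pt_eps p z (Hc z ltac:(lra)) (- p z) ltac:(lra)) as [d [Hd Hnear]].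
    set (s := Rmin t (z + d / 2)).
    assert (Es : E s).
    { split; [split; [unfold s; apply Rmin_glb; lra|apply Rmin_l]|].
      intros y Hy. destruct (Rlt_or_le y z); [apply Hneg; lra|].
      assert (y <= z + d / 2) by (pose proof (Rmin_r t (z + d / 2)); unfold s in Hy; lra).
      assert (Hyz : Rabs (y - z) < d) by (rewrite Rabs_right; lra).
      specialize (Hnear y Hyz). apply Rabs_def2 in Hnear. lra. }
    assert (z < s) by (unfold s; apply Rmin_glb_lt; lra).
    pose proof (Hub s Es). lra.
  - assert (Haz' : a < z) by (destruct (Req_dec a z) as [->|]; lra).
    exists z. split; [lra|]. split; [|exact Hneg].
    destruct (Rle_lt_or_eq_dec 0 (p z) Hz) as [Hpos|]; [exfalso|auto].
    destruct (continuity_pt_eps p z (Hc z ltac:(lra)) (p z) Hpos) as [d [Hd Hnear]].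
    set (y := Rmax a (z - d / 2)).
    assert (a <= y < z) by (unfold y; split; [apply Rmax_l|apply Rmax_lub_lt; lra]).
    assert (Hyz : Rabs (y - z) < d)
      by (pose proof (Rmax_r a (z - d / 2)); rewrite Rabs_left; unfold y in *; lra).
    specialize (Hnear y Hyz). apply Rabs_def2 in Hnear.
    pose proof (Hneg y ltac:(lra)). lra.
Qed.

Lemma neg_of_derive_neg_at_zeros (p p' : R -> R) a t :
  a < t -> (forall x, a <= x <= t -> derivable_pt_lim p x (p' x)) ->
  (forall x, a <= x <= t -> p x = 0 -> p' x < 0) -> p a <= 0 -> p t < 0.
Proof.
  intros Hat HD Hzero Ha.
  assert (Hstart : exists a', a <= a' < t /\ p a' < 0).
  { destruct (Rlt_or_le (p a) 0) as [|Hpa]; [exists a; split; lra|].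
    destruct (derivable_pt_lim_sign_close p a (p' a) (t - a)) as [h [Hh [Hright _]]];
      [apply HD; lra|apply Rlt_not_eq, Hzero; lra|lra|].
    exists (a + h). split; [lra|].
    assert (p' a < 0) by (apply Hzero; lra). nra. }
  destruct Hstart as [a' [Ha' Hpa']].
  destruct (Rlt_or_le (p t) 0) as [|Hpt]; [assumption|exfalso].
  destruct (first_zero_after_neg p a' t) as [z [Hz [Hpz Hneg]]]; try lra.
  { intros x Hx. exact (derivable_continuous_pt p x (exist _ _ (HD x ltac:(lra)))). }
  (* p crosses zero downwards at z, so it is positive just left of z *)
  assert (Hd : p' z < 0) by (apply Hzero; lra).
  destruct (derivable_pt_lim_sign_close p z (p' z) (z - a')) as [h [Hh [_ Hleft]]];
    [apply HD; lra|lra|lra|].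
  rewrite Hpz in Hleft. pose proof (Hneg (z - h) ltac:(lra)). nra.
Qed.

Lemma derivable_pt_lim_inverse (F Y : R -> R) s l rho :
  0 < rho -> (forall t, Rabs (t - s) < rho -> F (Y t) = t) ->
  continuity_pt Y s -> derivable_pt_lim F (Y s) l -> l <> 0 ->
  derivable_pt_lim Y s (/ l).
Proof.
  intros Hrho Hinv HY HF Hl eps Heps.
  assert (Hal : 0 < Rabs l) by (apply Rabs_pos_lt, Hl).
  set (eta := Rmin (Rabs l / 2) (eps * (Rabs l * Rabs l) / 4)).
  assert (Heta : 0 < eta) by (apply Rmin_glb_lt; [lra|]; assert (0 < Rabs l * Rabs l) by nra; nra).
  assert (eta <= Rabs l / 2) by apply Rmin_l.
  assert (eta <= eps * (Rabs l * Rabs l) / 4) by apply Rmin_r.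
  destruct (HF eta Heta) as [[d1 Hd1] Hquot]; simpl in Hquot.
  destruct (continuity_pt_eps Y s HY d1 Hd1) as [d2 [Hd2 HYnear]].
  assert (Hd : 0 < Rmin d2 rho) by (apply Rmin_glb_lt; lra).
  exists (mkposreal _ Hd). intros h Hh0 Hh. simpl in Hh.
  pose proof (Rmin_l d2 rho). pose proof (Rmin_r d2 rho).
  assert (Hsh : F (Y (s + h)) = s + h)
    by (apply Hinv; replace (s + h - s) with h by ring; lra).
  assert (Hs : F (Y s) = s) by (apply Hinv; rewrite Rminus_eq_0, Rabs_R0; lra).
  set (k := Y (s + h) - Y s).
  assert (Hk0 : k <> 0).
  { intro Hk. assert (Y (s + h) = Y s) as E by (unfold k in Hk; lra).
    rewrite E in Hsh. lra. }
  assert (Hkd : Rabs k < d1) by (apply HYnear; replace (s + h - s) with h by ring; lra).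
  specialize (Hquot k Hk0 Hkd).
  replace (Y s + k) with (Y (s + h)) in Hquot by (unfold k; ring).
  rewrite Hsh, Hs in Hquot. replace (s + h - s) with h in Hquot by ring.
  (* D = h / k is the difference quotient of F, within eta of l *)
  set (D := h / k) in *.
  assert (HDl : Rabs l / 2 <= Rabs D).
  { pose proof (Rabs_triang_inv l (l - D)). replace (l - (l - D)) with D in * by ring.
    rewrite <- Rabs_Ropp in Hquot. replace (- (D - l)) with (l - D) in Hquot by ring. lra. }
  assert (HD0 : D <> 0) by (intro HD0; rewrite HD0, Rabs_R0 in HDl; lra).
  replace (k / h - / l) with ((l - D) / (D * l)) by (unfold D; field; auto).
  unfold Rdiv. rewrite Rabs_mult, Rabs_inv, Rabs_mult.
  rewrite <- (Rabs_Ropp (l - D)). replace (- (l - D)) with (D - l) by ring.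
  assert (0 < Rabs D * Rabs l) by (apply Rmult_lt_0_compat; lra).
  apply (Rmult_lt_reg_r (Rabs D * Rabs l)); [assumption|].
  rewrite Rmult_assoc, Rinv_l by lra.
  assert (Rabs l / 2 * Rabs l <= Rabs D * Rabs l) by (apply Rmult_le_compat_r; lra).
  nra.
Qed.

Lemma decreasing_between_limits (E : R -> R) L1 L2 :
  decreasing E -> lim_minus_inf E L1 -> lim_plus_inf E L2 -> forall x, L2 <= E x <= L1.
Proof.
  intros Hdec H1 H2 x. split.
  - destruct (Rle_or_lt L2 (E x)) as [|Hlt]; [assumption|exfalso].
    destruct (H2 (L2 - E x) ltac:(lra)) as [M HM].
    specialize (HM (Rmax M x) (Rle_ge _ _ (Rmax_l _ _))).
    pose proof (Hdec x (Rmax M x) (Rmax_r _ _)). apply Rabs_def2 in HM. lra.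
  - destruct (Rle_or_lt (E x) L1) as [|Hlt]; [assumption|exfalso].
    destruct (H1 (E x - L1) ltac:(lra)) as [M HM].
    specialize (HM (Rmin M x) (Rmin_l _ _)).
    pose proof (Hdec (Rmin M x) x (Rmin_r _ _)). apply Rabs_def2 in HM. lra.
Qed.

Definition clamp01 (s : R) : R := Rmax 0 (Rmin s 1).

Lemma clamp01_in s : 0 <= clamp01 s <= 1.
Proof.
  unfold clamp01. split; [apply Rmax_l|]. apply Rmax_lub; [lra|apply Rmin_r].
Qed.

Lemma clamp01_id s : 0 <= s <= 1 -> clamp01 s = s.
Proof. intros Hs. unfold clamp01. rewrite Rmin_left, Rmax_right; lra. Qed.

Lemma clamp01_lipschitz a b : Rabs (clamp01 a - clamp01 b) <= Rabs (a - b).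
Proof.
  unfold clamp01, Rmax, Rmin.
  destruct (Rle_dec a 1); destruct (Rle_dec b 1); destruct (Rle_dec 0 a); destruct (Rle_dec 0 b);
  destruct (Rle_dec 0 1); try lra;
  repeat match goal with |- context [Rle_dec ?x ?y] => destruct (Rle_dec x y) end;
  unfold Rabs; repeat destruct (Rcase_abs _); lra.
Qed.

Lemma C1_on_01_continuity_clamp01 (g : R -> R) :
  C1_on_01 g -> continuity (fun s => g (clamp01 s)).
Proof.
  intros [g' [Hdiff _]] s eps Heps.
  set (x := clamp01 s). assert (Hx : 0 <= x <= 1) by apply clamp01_in.
  destruct (Hdiff x Hx 1 ltac:(lra)) as [alp [Halp Hquot]]. simpl in Hquot.
  (* on [0,1], g is Lipschitz near x with constant |g' x| + 1 *)
  set (L := Rabs (g' x) + 1).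
  assert (HL : 0 < L) by (pose proof (Rabs_pos (g' x)); unfold L; lra).
  exists (Rmin alp (eps / L)). split; [apply Rmin_glb_lt; [lra|apply Rdiv_lt_0_compat; lra]|].
  intros y [_ Hys]. simpl in *. unfold R_dist in *.
  pose proof (Rmin_l alp (eps / L)). pose proof (Rmin_r alp (eps / L)).
  pose proof (clamp01_lipschitz y s) as Hlip. fold x in Hlip.
  set (z := clamp01 y) in *. assert (Hz : 0 <= z <= 1) by apply clamp01_in.
  destruct (Req_dec z x) as [->|Hne]; [rewrite Rminus_eq_0, Rabs_R0; lra|].
  set (q := (g z - g x) / (z - x)).
  assert (Hq : Rabs (q - g' x) < 1) by (apply Hquot; split; [split; auto|lra]).
  assert (Hq' : Rabs q < L).
  { pose proof (Rabs_triang (q - g' x) (g' x)). replace (q - g' x + g' x) with q in * by ring.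
    unfold L; lra. }
  replace (g z - g x) with (q * (z - x)) by (unfold q; field; lra).
  rewrite Rabs_mult.
  assert (Rabs (z - x) * L < eps).
  { assert (Hzx : Rabs (z - x) < eps / L) by lra.
    apply (Rmult_lt_compat_r L) in Hzx; [|lra]. unfold Rdiv in Hzx.
    rewrite Rmult_assoc, Rinv_l, Rmult_1_r in Hzx by lra. exact Hzx. }
  pose proof (Rabs_pos q). pose proof (Rabs_pos (z - x)). nra.
Qed.

Lemma continuity_bounded_01 (F : R -> R) :
  (forall x, 0 <= x <= 1 -> continuity_pt F x) ->
  exists M, forall x, 0 <= x <= 1 -> Rabs (F x) <= M.
Proof.
  intros HF.
  destruct (continuity_ab_maj F 0 1 ltac:(lra) HF) as [xM [HM _]].
  destruct (continuity_ab_min F 0 1 ltac:(lra) HF) as [xm [Hm _]].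
  exists (Rmax (F xM) (- F xm)). intros x Hx. apply Rabs_le.
  pose proof (HM x Hx). pose proof (Hm x Hx).
  pose proof (Rmax_l (F xM) (- F xm)). pose proof (Rmax_r (F xM) (- F xm)). lra.
Qed.

Definition energy (g g1 G : R -> R) (x : R) : R := g1 x * g1 x / 2 + G (g x).

Lemma derivable_pt_lim_energy (g g1 g2 G gc : R -> R) x :
  derivable_pt_lim g x (g1 x) -> derivable_pt_lim g1 x (g2 x) ->
  derivable_pt_lim G (g x) (gc (g x)) ->
  derivable_pt_lim (energy g g1 G) x (g1 x * (g2 x + gc (g x))).
Proof.
  intros Hg Hg1 HG. unfold energy.
  replace (g1 x * (g2 x + gc (g x)))
    with ((g2 x * g1 x + g1 x * g2 x) * / 2 + g1 x * g1 x * 0 + gc (g x) * g1 x) by field.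
  apply derivable_pt_lim_plus.
  - apply (derivable_pt_lim_mult (fun y => g1 y * g1 y) (fun _ => / 2)).
    + exact (derivable_pt_lim_mult g1 g1 x _ _ Hg1 Hg1).
    + apply derivable_pt_lim_const.
  - exact (derivable_pt_lim_comp g G x _ _ Hg HG).
Qed.

Lemma deriv_bound_of_damped_ode (g g1 g2 : R -> R) c B :
  (forall x, derivable_pt_lim g x (g1 x)) -> (forall x, derivable_pt_lim g1 x (g2 x)) ->
  (forall x, 0 <= g x <= 1) -> (forall x, Rabs (g2 x + c * g1 x) <= B) ->
  forall x, Rabs (g1 x) <= 1 + Rabs c + B.
Proof.
  intros Hg Hg1 Hg01 HB x.
  (* g1 is at most 1 somewhere in [x, x+1], and g1 + c g varies by at most B there *)
  destruct (MVT_cor2 g g1 x (x + 1)) as [xi [Hxi Hxi_in]]; [lra|intros; apply Hg|].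
  assert (Hg1xi : Rabs (g1 xi) <= 1).
  { replace (g1 xi) with (g (x + 1) - g x) by (rewrite Hxi; field).
    pose proof (Hg01 (x + 1)); pose proof (Hg01 x). apply Rabs_le; lra. }
  assert (Hvar : Rabs ((g1 xi + c * g xi) - (g1 x + c * g x)) <= B * (xi - x)).
  { apply (derive_abs_bound_interv (fun y => g1 y + c * g y) (fun y => g2 y + c * g1 y));
      [lra| |intros; apply HB].
    intros y _. apply derivable_pt_lim_plus; [apply Hg1|].
    apply derivable_pt_lim_scal with (f := g). apply Hg. }
  assert (HB0 : 0 <= B) by (pose proof (HB x); pose proof (Rabs_pos (g2 x + c * g1 x)); lra).
  assert (Hcg : Rabs (c * g xi - c * g x) <= Rabs c).
  { replace (c * g xi - c * g x) with (c * (g xi - g x)) by ring. rewrite Rabs_mult.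
    pose proof (Hg01 xi); pose proof (Hg01 x).
    assert (Rabs (g xi - g x) <= 1) by (apply Rabs_le; lra).
    pose proof (Rabs_pos c). nra. }
  replace (g1 x) with (g1 xi - ((g1 xi + c * g xi) - (g1 x + c * g x)) + (c * g xi - c * g x))
    by ring.
  eapply Rle_trans; [apply Rabs_triang|].
  eapply Rle_trans; [apply Rplus_le_compat_r, Rabs_triang|]. rewrite Rabs_Ropp.
  assert (B * (xi - x) <= B) by nra. lra.
Qed.

Lemma bounded_second_deriv_of_ode (g g1 g2 F : R -> R) c :
  (forall x, derivable_pt_lim g x (g1 x)) -> (forall x, derivable_pt_lim g1 x (g2 x)) ->
  (forall x, 0 <= g x <= 1) -> bounded_fun F ->
  (forall x, g2 x + c * g1 x + g x * (1 - g x - F x) = 0) -> bounded_fun g2.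
Proof.
  intros Hg Hg1 Hg01 [M HM] Hode.
  assert (HN : forall x, Rabs (g2 x + c * g1 x) <= 1 + M).
  { intro x. replace (g2 x + c * g1 x) with (- (g x * (1 - g x - F x))) by (pose proof (Hode x); lra).
    rewrite Rabs_Ropp, Rabs_mult. pose proof (Hg01 x). pose proof (HM x).
    rewrite (Rabs_right (g x)) by lra.
    assert (Rabs (1 - g x - F x) <= 1 + M).
    { replace (1 - g x - F x) with ((1 - g x) + - F x) by ring.
      eapply Rle_trans; [apply Rabs_triang|]. rewrite Rabs_Ropp, Rabs_right; lra. }
    pose proof (Rabs_pos (1 - g x - F x)). nra. }
  pose proof (deriv_bound_of_damped_ode g g1 g2 c (1 + M) Hg Hg1 Hg01 HN) as Hg1b.
  exists (1 + M + Rabs c * (1 + Rabs c + (1 + M))). intro x.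
  replace (g2 x) with ((g2 x + c * g1 x) + - (c * g1 x)) by ring.
  eapply Rle_trans; [apply Rabs_triang|]. rewrite Rabs_Ropp, Rabs_mult.
  pose proof (HN x). pose proof (Hg1b x). pose proof (Rabs_pos c).
  assert (Rabs c * Rabs (g1 x) <= Rabs c * (1 + Rabs c + (1 + M))) by (apply Rmult_le_compat_l; lra).
  lra.
Qed.

Lemma decreasing_front_in_01 (g : R -> R) :
  decreasing g -> lim_minus_inf g 1 -> lim_plus_inf g 0 -> forall x, 0 <= g x <= 1.
Proof.
  intros Hdec Hl Hr x. apply (decreasing_between_limits g 1 0); assumption.
Qed.

Section Front.

Variables g g1 g2 : R -> R.
Hypothesis Hg : forall x, derivable_pt_lim g x (g1 x).
Hypothesis Hg1 : forall x, derivable_pt_lim g1 x (g2 x).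
Hypothesis Hg01 : forall x, 0 <= g x <= 1.
Hypothesis Hleft : lim_minus_inf g 1.
Hypothesis Hright : lim_plus_inf g 0.

Lemma front_continuous x : continuity_pt g x.
Proof. exact (derivable_continuous_pt g x (exist _ _ (Hg x))). Qed.

Lemma front_reaches_below x v : 0 < v < g x -> exists t, x <= t /\ g t = v.
Proof.
  intros Hv. destruct (Hright v ltac:(lra)) as [M HM].
  set (y := Rmax M x + 1).
  assert (Hy : g y < v) by (specialize (HM y ltac:(unfold y; pose proof (Rmax_l M x); lra));
    apply Rabs_def2 in HM; lra).
  assert (x < y) by (unfold y; pose proof (Rmax_r M x); lra).
  destruct (IVT_decr g x y v) as [t [Ht Hgt]]; try lra; [intros; apply front_continuous|].
  exists t. split; [lra|exact Hgt].
Qed.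

Lemma front_reaches_above x v : g x < v < 1 -> exists t, t <= x /\ g t = v.
Proof.
  intros Hv. destruct (Hleft (1 - v) ltac:(lra)) as [M HM].
  set (y := Rmin M x - 1).
  assert (Hy : v < g y) by (specialize (HM y ltac:(unfold y; pose proof (Rmin_l M x); lra));
    apply Rabs_def2 in HM; lra).
  assert (y < x) by (unfold y; pose proof (Rmin_r M x); lra).
  destruct (IVT_decr g y x v) as [t [Ht Hgt]]; try lra; [intros; apply front_continuous|].
  exists t. split; [lra|exact Hgt].
Qed.

Lemma front_takes_value v : 0 < v < 1 -> exists x, g x = v.
Proof.
  intros Hv. destruct (Hleft (1 - v) ltac:(lra)) as [M HM].
  specialize (HM M (Rle_refl M)). apply Rabs_def2 in HM.
  destruct (front_reaches_below M v) as [t [_ Ht]]; [lra|]. exists t. exact Ht.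
Qed.

Lemma front_not_flat : ~ (forall x, g1 x = 0).
Proof.
  intros Hflat. destruct (front_takes_value (1 / 2)) as [x Hx]; [lra|].
  destruct (front_reaches_below x (1 / 4)) as [t [Hxt Ht]]; [lra|].
  pose proof (derive_zero_const g g1 x t Hxt (fun y _ => Hg y) (fun y _ => Hflat y)). lra.
Qed.

Hypothesis Hg2_bounded : bounded_fun g2.

Lemma front_deriv_small_near_ends eps : 0 < eps -> exists del, 0 < del /\
  forall y, g y < del \/ 1 - del < g y -> Rabs (g1 y) < eps.
Proof.
  intros Heps. destruct Hg2_bounded as [M HM].
  set (K := Rabs M + 1).
  assert (HK : 0 < K) by (pose proof (Rabs_pos M); unfold K; lra).
  assert (HKb : forall x, Rabs (g2 x) <= K) by (intro x; pose proof (HM x); pose proof (Rle_abs M); unfold K; lra).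
  (* if |g1 y| >= eps, g moves by more than eps t / 2 on each side of y within time t *)
  set (t := eps / (2 * K)).
  assert (Ht : 0 < t) by (apply Rdiv_lt_0_compat; lra).
  assert (HtK : K * t = eps / 2) by (unfold t; field; lra).
  exists (eps * t / 2). split; [nra|].
  intros y Hy. destruct (Rlt_or_le (Rabs (g1 y)) eps) as [|Hge]; [assumption|exfalso].
  assert (Hclose : forall z, y - t <= z <= y + t -> Rabs (g1 z - g1 y) <= eps / 2).
  { intros z Hz. destruct (Rle_or_lt y z).
    - pose proof (derive_abs_bound_interv g1 g2 y z K ltac:(lra) (fun u _ => Hg1 u) (fun u _ => HKb u)).
      assert (K * (z - y) <= K * t) by nra. lra.
    - pose proof (derive_abs_bound_interv g1 g2 z y K ltac:(lra) (fun u _ => Hg1 u) (fun u _ => HKb u)).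
      rewrite Rabs_minus_sym. assert (K * (y - z) <= K * t) by nra. lra. }
  assert (Hslope : forall z, y - t <= z <= y + t -> eps / 2 <= Rabs (g1 z) /\ g1 z * g1 y > 0).
  { intros z Hz. specialize (Hclose z Hz). apply Rabs_le_between in Hclose.
    unfold Rabs in *. destruct (Rcase_abs (g1 y)), (Rcase_abs (g1 z)); split; nra. }
  pose proof (Hg01 (y + t)). pose proof (Hg01 (y - t)).
  destruct (Rle_or_lt 0 (g1 y)) as [Hp|Hn].
  - assert (eps / 2 * t <= g (y + t) - g y).
    { replace t with (y + t - y) at 1 by ring. apply (MVT_lower_bound g g1); [lra|intros; apply Hg|].
      intros z Hz. destruct (Hslope z ltac:(lra)) as [Hs1 Hs2].
      assert (0 < g1 z) by nra. rewrite Rabs_right in Hs1; lra. }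
    assert (eps / 2 * t <= g y - g (y - t)).
    { replace t with (y - (y - t)) at 1 by ring. apply (MVT_lower_bound g g1); [lra|intros; apply Hg|].
      intros z Hz. destruct (Hslope z ltac:(lra)) as [Hs1 Hs2].
      assert (0 < g1 z) by nra. rewrite Rabs_right in Hs1; lra. }
    destruct Hy; nra.
  - assert (g (y + t) - g y <= - (eps / 2) * t).
    { replace t with (y + t - y) at 2 by ring. apply (MVT_upper_bound g g1); [lra|intros; apply Hg|].
      intros z Hz. destruct (Hslope z ltac:(lra)) as [Hs1 Hs2].
      assert (g1 z < 0) by nra. rewrite Rabs_left in Hs1; lra. }
    assert (g y - g (y - t) <= - (eps / 2) * t).
    { replace t with (y - (y - t)) at 2 by ring. apply (MVT_upper_bound g g1); [lra|intros; apply Hg|].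
      intros z Hz. destruct (Hslope z ltac:(lra)) as [Hs1 Hs2].
      assert (g1 z < 0) by nra. rewrite Rabs_left in Hs1; lra. }
    destruct Hy; nra.
Qed.

Lemma front_strictly_decreasing : (forall x, g1 x <= 0) -> (forall x, 0 < g x < 1 -> g1 x < 0) ->
  forall y y', y < y' -> 0 < g y < 1 \/ 0 < g y' < 1 -> g y' < g y.
Proof.
  intros Hneg Hstrict y y' Hyy' Hin.
  assert (Hdec : forall a b, a <= b -> g b <= g a)
    by (intros a b Hab; apply (derive_nonpos_interv g g1); auto).
  destruct (Rlt_or_le (g y') (g y)) as [|Hge]; [assumption|exfalso].
  assert (Hbetween : forall m, y <= m <= y' -> 0 < g m < 1).
  { intros m Hm. pose proof (Hdec y m ltac:(lra)). pose proof (Hdec m y' ltac:(lra)).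
    pose proof (Hdec y y' ltac:(lra)). destruct Hin; lra. }
  assert (g y' < g y); [|lra].
  apply (derive_neg_interv g g1); [lra|intros; apply Hg|intros m Hm; apply Hstrict, Hbetween, Hm].
Qed.

Lemma front_inverse : (forall x, g1 x <= 0) -> (forall x, 0 < g x < 1 -> g1 x < 0) ->
  exists Y : R -> R, (forall s, 0 < s < 1 -> g (Y s) = s) /\
    (forall s, 0 < s < 1 -> derivable_pt_lim Y s (/ g1 (Y s))).
Proof.
  intros Hneg Hstrict.
  pose proof (front_strictly_decreasing Hneg Hstrict) as Hsdec.
  set (Y := fun s => epsilon (inhabits 0) (fun y => g y = s)).
  assert (HY : forall s, 0 < s < 1 -> g (Y s) = s)
    by (intros s Hs; apply (epsilon_spec (inhabits 0) (fun y => g y = s)), front_takes_value, Hs).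
  exists Y. split; [exact HY|]. intros s Hs.
  apply (derivable_pt_lim_inverse g Y s (g1 (Y s)) (Rmin s (1 - s))).
  - apply Rmin_glb_lt; lra.
  - intros t Ht. apply HY. pose proof (Rmin_l s (1 - s)). pose proof (Rmin_r s (1 - s)).
    apply Rabs_def2 in Ht. lra.
  - (* g is strictly monotone, so a small change of level forces a small change of Y *)
    intros eps Heps.
    assert (Hlo : s < g (Y s - eps)) by (rewrite <- (HY s Hs) at 1; apply Hsdec; [lra|right; rewrite HY; lra]).
    assert (Hhi : g (Y s + eps) < s) by (rewrite <- (HY s Hs) at 2; apply Hsdec; [lra|left; rewrite HY; lra]).
    exists (Rmin (g (Y s - eps) - s) (s - g (Y s + eps))). split; [apply Rmin_glb_lt; lra|].
    intros t [_ Ht]. simpl in *. unfold R_dist in *.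
    pose proof (Rmin_l (g (Y s - eps) - s) (s - g (Y s + eps))).
    pose proof (Rmin_r (g (Y s - eps) - s) (s - g (Y s + eps))).
    apply Rabs_def2 in Ht. pose proof (Hg01 (Y s - eps)). pose proof (Hg01 (Y s + eps)).
    assert (Hgt : g (Y t) = t) by (apply HY; lra).
    apply Rabs_def1.
    + destruct (Rlt_or_le (Y t) (Y s + eps)) as [|Hq]; [lra|].
      assert (g (Y t) <= g (Y s + eps)) by (apply (derive_nonpos_interv g g1); auto). lra.
    + destruct (Rlt_or_le (Y s - eps) (Y t)) as [|Hq]; [lra|].
      assert (g (Y s - eps) <= g (Y t)) by (apply (derive_nonpos_interv g g1); auto). lra.
  - apply Hg.
  - apply Rlt_not_eq, Hstrict. rewrite HY; lra.
Qed.

Variables gc G : R -> R.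
Hypothesis HG : forall s, derivable_pt_lim G s (gc s).

Lemma front_energy_close L eps : 0 < eps -> exists del, 0 < del /\ forall y,
  (g y < del \/ 1 - del < g y) -> Rabs (g y - L) < del -> Rabs (energy g g1 G y - G L) < eps.
Proof.
  intros Heps.
  destruct (front_deriv_small_near_ends (Rmin 1 (eps / 2))) as [d1 [Hd1 Hsmall]];
    [apply Rmin_glb_lt; lra|].
  destruct (continuity_pt_eps G L (derivable_continuous_pt G L (exist _ _ (HG L))) (eps / 2))
    as [d2 [Hd2 HGnear]]; [lra|].
  exists (Rmin d1 d2). split; [apply Rmin_glb_lt; lra|]. intros y Hy HyL.
  pose proof (Rmin_l d1 d2). pose proof (Rmin_r d1 d2).
  pose proof (Rmin_l 1 (eps / 2)). pose proof (Rmin_r 1 (eps / 2)).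
  assert (Hg1y : Rabs (g1 y) < Rmin 1 (eps / 2)) by (apply Hsmall; lra).
  assert (HGy : Rabs (G (g y) - G L) < eps / 2) by (apply HGnear; lra).
  assert (Hsq : Rabs (g1 y * g1 y / 2) < eps / 2).
  { rewrite Rabs_div, Rabs_mult, (Rabs_right 2) by lra.
    pose proof (Rabs_pos (g1 y)). nra. }
  unfold energy. replace (g1 y * g1 y / 2 + G (g y) - G L) with (g1 y * g1 y / 2 + (G (g y) - G L))
    by ring.
  eapply Rle_lt_trans; [apply Rabs_triang|]. lra.
Qed.

Lemma front_energy_lim_minus : lim_minus_inf (energy g g1 G) (G 1).
Proof.
  intros eps Heps. destruct (front_energy_close 1 eps Heps) as [d [Hd Hclose]].
  destruct (Hleft d Hd) as [M HM]. exists M. intros x Hx. specialize (HM x Hx).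
  apply Hclose; [right; apply Rabs_def2 in HM; lra|exact HM].
Qed.

Lemma front_energy_lim_plus : lim_plus_inf (energy g g1 G) (G 0).
Proof.
  intros eps Heps. destruct (front_energy_close 0 eps Heps) as [d [Hd Hclose]].
  destruct (Hright d Hd) as [M HM]. exists M. intros x Hx. specialize (HM x Hx).
  apply Hclose; [left; apply Rabs_def2 in HM; lra|exact HM].
Qed.

Lemma derivable_pt_lim_front_energy c h :
  (forall x, g2 x = - c * g1 x - gc (g x) + h x) ->
  forall x, derivable_pt_lim (energy g g1 G) x (- c * (g1 x * g1 x) + g1 x * h x).
Proof.
  intros Hode x. replace (- c * (g1 x * g1 x) + g1 x * h x) with (g1 x * (g2 x + gc (g x)))
    by (rewrite Hode; ring).
  apply derivable_pt_lim_energy; auto.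
Qed.

Lemma front_potential_gap c h : 0 < c -> decreasing g -> (forall x, 0 <= h x) ->
  (forall x, g2 x = - c * g1 x - gc (g x) + h x) -> G 0 < G 1.
Proof.
  intros Hc Hdec Hh Hode.
  pose proof (derivable_pt_lim_front_energy c h Hode) as HE.
  pose proof (derive_nonpos_of_decreasing g g1 Hdec Hg) as Hg1neg.
  assert (HEdec : decreasing (energy g g1 G)).
  { intros a b Hab. apply (derive_nonpos_interv _ _ a b Hab (fun x _ => HE x)).
    intros x _. pose proof (Hg1neg x). pose proof (Hh x). nra. }
  pose proof (decreasing_between_limits _ _ _ HEdec front_energy_lim_minus front_energy_lim_plus)
    as Hrange.
  destruct (Rle_lt_or_eq_dec (G 0) (G 1) (Rle_trans _ _ _ (proj1 (Hrange 0)) (proj2 (Hrange 0))))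
    as [|Heq]; [assumption|exfalso].
  (* equal limits force a constant energy, hence a vanishing derivative *)
  apply front_not_flat. intro x.
  assert (Hd0 : - c * (g1 x * g1 x) + g1 x * h x = 0).
  { apply (derive_zero_at_local_min (energy g g1 G) x _ (x - 1) (x + 1)); [lra| |apply HE].
    intros y _. pose proof (Hrange x). pose proof (Hrange y). lra. }
  pose proof (Hg1neg x). pose proof (Hh x).
  assert (g1 x * h x <= 0) by nra. assert (g1 x * g1 x = 0) by nra. nra.
Qed.

Lemma front_potential_le_of_nonpos_speed c :
  c <= 0 -> (forall x, g2 x = - c * g1 x - gc (g x)) -> G 1 <= G 0.
Proof.
  intros Hc Hode.
  assert (HE : forall x, derivable_pt_lim (fun y => - energy g g1 G y) x (c * (g1 x * g1 x))).
  { intro x. replace (c * (g1 x * g1 x)) with (- (- c * (g1 x * g1 x) + g1 x * 0)) by ring.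
    apply derivable_pt_lim_opp, (derivable_pt_lim_front_energy c (fun _ => 0)).
    intro y. rewrite Hode. ring. }
  assert (HEdec : decreasing (fun y => - energy g g1 G y)).
  { intros a b Hab. apply (derive_nonpos_interv _ _ a b Hab (fun x _ => HE x)).
    intros x _. nra. }
  assert (Hl : lim_minus_inf (fun y => - energy g g1 G y) (- G 1)).
  { intros eps Heps. destruct (front_energy_lim_minus eps Heps) as [M HM]. exists M.
    intros x Hx. rewrite <- Rabs_Ropp. replace (- (- energy g g1 G x - - G 1)) with (energy g g1 G x - G 1) by ring.
    apply HM, Hx. }
  assert (Hr : lim_plus_inf (fun y => - energy g g1 G y) (- G 0)).
  { intros eps Heps. destruct (front_energy_lim_plus eps Heps) as [M HM]. exists M.
    intros x Hx. rewrite <- Rabs_Ropp. replace (- (- energy g g1 G x - - G 0)) with (energy g g1 G x - G 0) by ring.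
    apply HM, Hx. }
  pose proof (decreasing_between_limits _ _ _ HEdec Hl Hr 0). lra.
Qed.

Section PositiveSpeed.

Variables c0 r1 : R.
Hypothesis Hode : forall x, g2 x = - c0 * g1 x - gc (g x).
Hypothesis Hc0 : 0 < c0.
Hypothesis HG0 : G 0 = 0.
Hypothesis HG_nonpos : forall s, 0 <= s <= r1 -> G s <= 0.
Hypothesis Hgc_pos : forall s, r1 < s < 1 -> 0 < gc s.

Lemma front_energy_decreasing : decreasing (energy g g1 G).
Proof.
  assert (HE := derivable_pt_lim_front_energy c0 (fun _ => 0)
    ltac:(intro x; rewrite Hode; ring)).
  intros a b Hab. apply (derive_nonpos_interv _ _ a b Hab (fun x _ => HE x)).
  intros x _. nra.
Qed.

Lemma front_energy_range x : 0 <= energy g g1 G x <= G 1.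
Proof.
  rewrite <- HG0 at 1.
  exact (decreasing_between_limits _ _ _ front_energy_decreasing
    front_energy_lim_minus front_energy_lim_plus x).
Qed.

Lemma front_rest_of_zero_energy x : energy g g1 G x = 0 -> forall y, x <= y -> g y = 0.
Proof.
  intros Hx.
  (* beyond x the energy stays at its minimum 0, so g1 vanishes there *)
  assert (Hflat : forall y, x <= y -> g1 y = 0).
  { intros y Hy.
    assert (Hy0 : energy g g1 G y = 0)
      by (pose proof (front_energy_decreasing x y Hy); pose proof (front_energy_range y); lra).
    assert (HE := derivable_pt_lim_front_energy c0 (fun _ => 0)
      ltac:(intro z; rewrite Hode; ring) y).
    assert (Hd : - c0 * (g1 y * g1 y) + g1 y * 0 = 0).
    { apply (derive_zero_at_local_min (energy g g1 G) y _ (y - 1) (y + 1)); [lra| |exact HE].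
      intros z _. pose proof (front_energy_range z). lra. }
    assert (g1 y * g1 y = 0) by nra. nra. }
  assert (Hconst : forall y, x <= y -> g y = g x)
    by (intros y Hy; apply (derive_zero_const g g1); auto; intros z Hz; apply Hflat; lra).
  assert (Hgx : g x = 0).
  { destruct (Req_dec (g x) 0) as [|Hne]; [assumption|exfalso].
    destruct (Hright (Rabs (g x)) (Rabs_pos_lt _ Hne)) as [M HM].
    specialize (HM (Rmax M x) (Rle_ge _ _ (Rmax_l _ _))).
    rewrite Hconst, Rminus_0_r in HM by apply Rmax_r. lra. }
  intros y Hy. rewrite Hconst; assumption.
Qed.

Lemma front_critical_point_is_max x : g1 x = 0 -> 0 < g x < 1 -> g2 x < 0.
Proof.
  intros H0 Hx.
  assert (HEx : energy g g1 G x = G (g x)) by (unfold energy; rewrite H0; field).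
  assert (Hpos : 0 < G (g x)).
  { destruct (front_energy_range x) as [Hnn _]. destruct (Rle_lt_or_eq_dec _ _ Hnn) as [|Hz]; [lra|].
    pose proof (front_rest_of_zero_energy x ltac:(lra) x (Rle_refl x)). lra. }
  assert (r1 < g x) by (destruct (Rlt_or_le r1 (g x)); [assumption|]; pose proof (HG_nonpos (g x) ltac:(lra)); lra).
  rewrite Hode, H0. pose proof (Hgc_pos (g x) ltac:(lra)). lra.
Qed.

Lemma front_rising_point x : 0 < g x < 1 -> 0 <= g1 x ->
  exists x', 0 < g x' < 1 /\ 0 < g1 x'.
Proof.
  intros Hx Hg1x. destruct (Rle_lt_or_eq_dec 0 (g1 x) Hg1x) as [|Hzero]; [exists x; auto|].
  pose proof (front_critical_point_is_max x (eq_sym Hzero) Hx) as Hmax.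
  destruct (continuity_pt_eps g x (front_continuous x) (Rmin (g x) (1 - g x))) as [eta [Heta Hnear]];
    [apply Rmin_glb_lt; lra|].
  destruct (derivable_pt_lim_sign_close g1 x (g2 x) eta (Hg1 x)) as [h [Hh [_ Hleft']]]; [lra|lra|].
  exists (x - h). rewrite <- Hzero in Hleft'. split; [|nra].
  assert (Hd : Rabs (x - h - x) < eta)
    by (replace (x - h - x) with (- h) by ring; rewrite Rabs_Ropp, Rabs_right; lra).
  specialize (Hnear _ Hd). apply Rabs_def2 in Hnear.
  pose proof (Rmin_l (g x) (1 - g x)). pose proof (Rmin_r (g x) (1 - g x)). lra.
Qed.

Lemma front_no_rising_point x : 0 < g x < 1 -> 0 < g1 x -> False.
Proof.
  intros Hx Hg1x.
  destruct (derivable_pt_lim_sign_close g x (g1 x) 1 (Hg x)) as [h [Hh [_ Hbelow]]]; [lra|lra|].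
  set (b := x - h). assert (Hb : g b < g x) by (unfold b; nra).
  destruct (Hleft (1 - g x) ltac:(lra)) as [M HM].
  set (a := Rmin M b - 1).
  pose proof (Rmin_l M b). pose proof (Rmin_r M b).
  assert (Ha : g x < g a) by (specialize (HM a ltac:(unfold a; lra)); apply Rabs_def2 in HM; lra).
  assert (Hax : a < x) by (unfold a, b in *; lra).
  (* the minimum of g over [a, x] is attained at an interior critical point x1 *)
  destruct (continuity_ab_min g a x ltac:(lra) (fun z _ => front_continuous z)) as [x1 [Hmin Hx1]].
  assert (g x1 <= g b) by (apply Hmin; unfold a, b in *; lra).
  assert (Hx1a : a < x1) by (destruct (Req_dec a x1) as [<-|]; lra).
  assert (Hx1x : x1 < x) by (destruct (Req_dec x1 x) as [->|]; lra).
  assert (Hcrit : g1 x1 = 0)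
    by (apply (derive_zero_at_local_min g x1 _ a x); [lra|intros y Hy; apply Hmin; lra|apply Hg]).
  destruct (Rlt_or_le 0 (g x1)) as [Hpos|Hnpos].
  - (* a strict local maximum cannot be a minimum *)
    pose proof (front_critical_point_is_max x1 Hcrit ltac:(lra)) as Hmax.
    destruct (derivable_pt_lim_sign g1 x1 (g2 x1) (Hg1 x1) ltac:(lra)) as [e [He Hdown]].
    set (h2 := Rmin e (x - x1) / 2).
    pose proof (Rmin_l e (x - x1)). pose proof (Rmin_r e (x - x1)).
    assert (0 < Rmin e (x - x1)) by (apply Rmin_glb_lt; lra).
    assert (g (x1 + h2) < g (x1 + h2 / 2)).
    { apply (derive_neg_interv g g1); [unfold h2; lra|intros; apply Hg|].
      intros z Hz. destruct (Hdown (z - x1)) as [Hd _]; [unfold h2 in *; lra|].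
      replace (x1 + (z - x1)) with z in Hd by ring. rewrite Hcrit in Hd. nra. }
    assert (g x1 <= g (x1 + h2)) by (apply Hmin; unfold h2; lra).
    assert (g (x1 + h2 / 2) <= g x1).
    { apply (derive_nonpos_interv g g1); [unfold h2; lra|intros; apply Hg|].
      intros z Hz. destruct (Req_dec z x1) as [->|Hne]; [lra|].
      destruct (Hdown (z - x1)) as [Hd _]; [unfold h2 in *; lra|].
      replace (x1 + (z - x1)) with z in Hd by ring. rewrite Hcrit in Hd. nra. }
    lra.
  - (* g would rest at 0 from x1 on *)
    assert (Hz : g x1 = 0) by (pose proof (Hg01 x1); lra).
    assert (HE0 : energy g g1 G x1 = 0) by (unfold energy; rewrite Hcrit, Hz, HG0; field).
    pose proof (front_rest_of_zero_energy x1 HE0 x ltac:(lra)). lra.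
Qed.

Lemma front_deriv_neg x : 0 < g x < 1 -> g1 x < 0.
Proof.
  intros Hx. destruct (Rlt_or_le (g1 x) 0) as [|Hge]; [assumption|exfalso].
  destruct (front_rising_point x Hx Hge) as [x' [Hx' Hg1x']].
  exact (front_no_rising_point x' Hx' Hg1x').
Qed.

Lemma front_deriv_nonpos x : g1 x <= 0.
Proof.
  destruct (Rlt_or_le 0 (g x)) as [Hp|Hz]; [destruct (Rlt_or_le (g x) 1) as [Hl|Hg1']|].
  - left. apply front_deriv_neg. lra.
  - assert (- g1 x = 0); [|lra].
    apply (derive_zero_at_local_min (fun y => - g y) x _ (x - 1) (x + 1)); [lra| |].
    + intros y _. pose proof (Hg01 y). lra.
    + apply derivable_pt_lim_opp, Hg.
  - right. apply (derive_zero_at_local_min g x _ (x - 1) (x + 1)); [lra| |apply Hg].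
    intros y _. pose proof (Hg01 y). lra.
Qed.

End PositiveSpeed.

End Front.

Section PhasePlane.

Variables w W1 W2 u U1 U2 Y gc h : R -> R.
Variables c c0 r1 : R.
Hypothesis Hw : forall x, derivable_pt_lim w x (W1 x).
Hypothesis HW1 : forall x, derivable_pt_lim W1 x (W2 x).
Hypothesis Hw01 : forall x, 0 <= w x <= 1.
Hypothesis Hw_left : lim_minus_inf w 1.
Hypothesis Hw_right : lim_plus_inf w 0.
Hypothesis Hw_dec : decreasing w.
Hypothesis HW2_bounded : bounded_fun W2.
Hypothesis Hu : forall x, derivable_pt_lim u x (U1 x).
Hypothesis HU1 : forall x, derivable_pt_lim U1 x (U2 x).
Hypothesis Hu01 : forall x, 0 <= u x <= 1.
Hypothesis HU2_bounded : bounded_fun U2.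
Hypothesis HU1_neg : forall x, 0 < u x < 1 -> U1 x < 0.
Hypothesis HY : forall s, 0 < s < 1 -> u (Y s) = s.
Hypothesis HY_deriv : forall s, 0 < s < 1 -> derivable_pt_lim Y s (/ U1 (Y s)).
Hypothesis Hh : forall x, 0 <= h x.
Hypothesis HW2 : forall x, W2 x = - c * W1 x - gc (w x) + h x.
Hypothesis HU2 : forall x, U2 x = - c0 * U1 x - gc (u x).
Hypothesis Hr1 : 0 < r1 < 1.
Hypothesis Hgc_nonpos : forall s, 0 <= s <= r1 -> gc s <= 0.
Hypothesis Hgc_nonneg : forall s, r1 <= s <= 1 -> 0 <= gc s.
Hypothesis Hc0c : c0 < c.

(* Z compares the slope of w with the slope of u at the same level w x;
   it is only meaningful where 0 < w x < 1. *)
Let Z x := - W1 x + U1 (Y (w x)).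
Let Z' x := - W2 x + U2 (Y (w x)) * (/ U1 (Y (w x)) * W1 x).
Let Phi x := Z x - (c - c0) * w x.

Lemma level_interval a b t : 0 < w a < 1 -> 0 < w b < 1 -> a <= t <= b -> 0 < w t < 1.
Proof.
  intros Ha Hb Ht. pose proof (Hw_dec a t ltac:(lra)). pose proof (Hw_dec t b ltac:(lra)). lra.
Qed.

Lemma slope_level x : 0 < w x < 1 -> u (Y (w x)) = w x /\ U1 (Y (w x)) < 0.
Proof. intros Hx. pose proof (HY (w x) Hx) as E. split; [exact E|apply HU1_neg; lra]. Qed.

Lemma derivable_pt_lim_Z x : 0 < w x < 1 -> derivable_pt_lim Z x (Z' x).
Proof.
  intros Hx. apply derivable_pt_lim_plus; [apply derivable_pt_lim_opp, HW1|].
  apply (derivable_pt_lim_comp (fun x => Y (w x)) U1); [|apply HU1].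
  exact (derivable_pt_lim_comp w Y x _ _ (Hw x) (HY_deriv _ Hx)).
Qed.

Lemma Z_deriv_eq x : 0 < w x < 1 ->
  Z' x - (c - c0) * W1 x = - h x + gc (w x) * Z x / U1 (Y (w x)).
Proof.
  intros Hx. destruct (slope_level x Hx) as [Hux HU1x].
  unfold Z', Z. rewrite HW2, HU2, Hux. field. lra.
Qed.

Lemma Z_deriv_neg_at_zero x : 0 < w x < 1 -> Z x = 0 -> Z' x < 0.
Proof.
  intros Hx HZ. pose proof (Z_deriv_eq x Hx) as E. rewrite HZ in E.
  destruct (slope_level x Hx) as [_ HU1x]. pose proof (Hh x).
  assert (W1 x = U1 (Y (w x))) by (unfold Z in HZ; lra).
  replace (gc (w x) * 0 / U1 (Y (w x))) with 0 in E by (field; lra). nra.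
Qed.

Lemma Z_stays_neg a b : a < b -> 0 < w a < 1 -> 0 < w b < 1 -> Z a <= 0 -> Z b < 0.
Proof.
  intros Hab Ha Hb HZa. apply (neg_of_derive_neg_at_zeros Z Z' a b Hab); auto.
  - intros m Hm. apply derivable_pt_lim_Z, (level_interval a b); auto.
  - intros m Hm. apply Z_deriv_neg_at_zero, (level_interval a b); auto.
Qed.

Lemma Z_small_near_ends eta : 0 < eta -> exists del, 0 < del /\
  forall t, 0 < w t < 1 -> (w t < del \/ 1 - del < w t) -> Rabs (Z t) < eta.
Proof.
  intros Heta.
  destruct (front_deriv_small_near_ends w W1 W2 Hw HW1 Hw01 HW2_bounded (eta / 2)) as [dw [Hdw Hsw]];
    [lra|].
  destruct (front_deriv_small_near_ends u U1 U2 Hu HU1 Hu01 HU2_bounded (eta / 2)) as [du [Hdu Hsu]];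
    [lra|].
  exists (Rmin dw du). split; [apply Rmin_glb_lt; lra|]. intros t Ht Hend.
  pose proof (Rmin_l dw du). pose proof (Rmin_r dw du).
  destruct (slope_level t Ht) as [Hut _].
  assert (Rabs (W1 t) < eta / 2) by (apply Hsw; lra).
  assert (Rabs (U1 (Y (w t))) < eta / 2) by (apply Hsu; rewrite Hut; lra).
  unfold Z. eapply Rle_lt_trans; [apply Rabs_triang|]. rewrite Rabs_Ropp. lra.
Qed.

Lemma Phi_decreasing a b : a <= b -> 0 < w a < 1 -> 0 < w b < 1 ->
  (forall m, a <= m <= b -> 0 <= gc (w m) * Z m) -> Phi b <= Phi a.
Proof.
  intros Hab Ha Hb Hsign.
  apply (derive_nonpos_interv Phi (fun x => Z' x - (c - c0) * W1 x)); [exact Hab| |].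
  - intros m Hm. apply derivable_pt_lim_minus; [apply derivable_pt_lim_Z, (level_interval a b); auto|].
    apply derivable_pt_lim_scal with (f := w), Hw.
  - intros m Hm. assert (Hin : 0 < w m < 1) by (apply (level_interval a b); auto).
    rewrite Z_deriv_eq by exact Hin. destruct (slope_level m Hin) as [_ HU1m].
    pose proof (Hsign m Hm). pose proof (Hh m).
    assert (/ U1 (Y (w m)) < 0) by (apply Rinv_lt_0_compat; lra).
    unfold Rdiv. nra.
Qed.

Lemma Z_pos_at_root xs : w xs = r1 -> 0 < Z xs.
Proof.
  intros Hxs. destruct (Rlt_or_le 0 (Z xs)) as [|HZ]; [assumption|exfalso].
  (* Phi decreases from xs on, while Z and w become small *)
  set (eps := (c - c0) * r1 / (2 * (1 + (c - c0)))).
  assert (Heps : 0 < eps) by (apply Rdiv_lt_0_compat; nra).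
  assert (Heps_def : eps * (2 * (1 + (c - c0))) = (c - c0) * r1) by (unfold eps; field; lra).
  assert (Heps_r1 : eps < r1) by nra.
  destruct (Z_small_near_ends eps Heps) as [del [Hdel Hsmall]].
  destruct (front_reaches_below w W1 Hw Hw_right xs (Rmin eps del / 2)) as [t [Hxt Ht]].
  { pose proof (Rmin_l eps del). assert (0 < Rmin eps del) by (apply Rmin_glb_lt; lra). lra. }
  pose proof (Rmin_l eps del). pose proof (Rmin_r eps del).
  assert (0 < Rmin eps del) by (apply Rmin_glb_lt; lra).
  assert (Hin_t : 0 < w t < 1) by lra.
  assert (Hin_xs : 0 < w xs < 1) by lra.
  assert (HZt := Hsmall t Hin_t ltac:(lra)). apply Rabs_def2 in HZt.
  assert (HPhi : Phi t <= Phi xs).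
  { apply Phi_decreasing; auto. intros m Hm.
    assert (Hin_m : 0 < w m < 1) by (apply (level_interval xs t); auto).
    assert (Z m <= 0).
    { destruct (Req_dec xs m) as [<-|]; [assumption|]. left. apply (Z_stays_neg xs m); auto; lra. }
    assert (gc (w m) <= 0) by (apply Hgc_nonpos; pose proof (Hw_dec xs m ltac:(lra)); lra).
    nra. }
  unfold Phi in HPhi. rewrite Hxs in HPhi.
  assert ((c - c0) * w t <= (c - c0) * eps) by (apply Rmult_le_compat_l; lra).
  nra.
Qed.

Lemma Z_neg_at_root xs : w xs = r1 -> Z xs < 0.
Proof.
  intros Hxs. destruct (Rlt_or_le (Z xs) 0) as [|HZ]; [assumption|exfalso].
  (* symmetric argument: Phi decreases up to xs, starting where w is close to 1 *)
  set (eps := (c - c0) * (1 - r1) / (2 * (1 + (c - c0)))).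
  assert (Heps : 0 < eps) by (apply Rdiv_lt_0_compat; nra).
  assert (Heps_def : eps * (2 * (1 + (c - c0))) = (c - c0) * (1 - r1)) by (unfold eps; field; lra).
  assert (Heps_r1 : eps < 1 - r1) by nra.
  destruct (Z_small_near_ends eps Heps) as [del [Hdel Hsmall]].
  destruct (front_reaches_above w W1 Hw Hw_left xs (1 - Rmin eps del / 2)) as [t [Htx Ht]].
  { pose proof (Rmin_l eps del). assert (0 < Rmin eps del) by (apply Rmin_glb_lt; lra). lra. }
  pose proof (Rmin_l eps del). pose proof (Rmin_r eps del).
  assert (0 < Rmin eps del) by (apply Rmin_glb_lt; lra).
  assert (Hin_t : 0 < w t < 1) by lra.
  assert (Hin_xs : 0 < w xs < 1) by lra.
  assert (HZt := Hsmall t Hin_t ltac:(lra)). apply Rabs_def2 in HZt.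
  assert (HPhi : Phi xs <= Phi t).
  { apply Phi_decreasing; auto. intros m Hm.
    assert (Hin_m : 0 < w m < 1) by (apply (level_interval t xs); auto).
    assert (0 <= Z m).
    { destruct (Req_dec m xs) as [->|]; [assumption|].
      destruct (Rlt_or_le 0 (Z m)) as [|HZm]; [lra|].
      pose proof (Z_stays_neg m xs ltac:(lra) Hin_m Hin_xs HZm). lra. }
    assert (0 <= gc (w m)) by (apply Hgc_nonneg; pose proof (Hw_dec m xs ltac:(lra)); lra).
    nra. }
  unfold Phi in HPhi. rewrite Hxs in HPhi.
  assert ((c - c0) * (1 - w t) <= (c - c0) * eps) by (apply Rmult_le_compat_l; lra).
  nra.
Qed.

Lemma phase_plane_contradiction : False.
Proof.
  destruct (front_takes_value w W1 Hw Hw_left Hw_right r1 Hr1) as [xs Hxs].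
  pose proof (Z_pos_at_root xs Hxs). pose proof (Z_neg_at_root xs Hxs). lra.
Qed.

End PhasePlane.

Lemma front_speed_le (w W1 W2 u U1 U2 gc G h : R -> R) (c c0 r1 : R) :
  (forall x, derivable_pt_lim w x (W1 x)) -> (forall x, derivable_pt_lim W1 x (W2 x)) ->
  lim_minus_inf w 1 -> lim_plus_inf w 0 -> decreasing w -> bounded_fun W2 ->
  (forall x, derivable_pt_lim u x (U1 x)) -> (forall x, derivable_pt_lim U1 x (U2 x)) ->
  (forall x, 0 <= u x <= 1) -> lim_minus_inf u 1 -> lim_plus_inf u 0 -> bounded_fun U2 ->
  (forall s, derivable_pt_lim G s (gc s)) -> G 0 = 0 -> 0 < r1 < 1 ->
  (forall s, 0 <= s <= r1 -> gc s <= 0) ->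
  (G 0 < G 1 -> forall s, r1 <= s <= 1 -> 0 <= gc s) ->
  (G 0 < G 1 -> forall s, r1 < s < 1 -> 0 < gc s) ->
  0 < c -> (forall x, 0 <= h x) ->
  (forall x, W2 x = - c * W1 x - gc (w x) + h x) ->
  (forall x, U2 x = - c0 * U1 x - gc (u x)) -> c <= c0.
Proof.
  intros Hw HW1 Hw_left Hw_right Hw_dec HW2_bounded Hu HU1 Hu01 Hu_left Hu_right HU2_bounded
    HG HG0 Hr1 Hgc_nonpos Hgc_nonneg Hgc_pos Hc Hh HW2 HU2.
  destruct (Rle_or_lt c c0) as [|Hc0c]; [assumption|exfalso].
  pose proof (decreasing_front_in_01 w Hw_dec Hw_left Hw_right) as Hw01.
  pose proof (front_potential_gap w W1 W2 Hw HW1 Hw01 Hw_left Hw_right HW2_bounded gc G HG c h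
    Hc Hw_dec Hh HW2) as Hgap.
  assert (Hc0 : 0 < c0).
  { destruct (Rlt_or_le 0 c0) as [|Hc0]; [assumption|exfalso].
    pose proof (front_potential_le_of_nonpos_speed u U1 U2 Hu HU1 Hu01 Hu_left Hu_right
      HU2_bounded gc G HG c0 Hc0 HU2). lra. }
  assert (HG_nonpos : forall s, 0 <= s <= r1 -> G s <= 0).
  { intros s Hs. rewrite <- HG0. apply (derive_nonpos_interv G gc); [lra|intros; apply HG|].
    intros x Hx. apply Hgc_nonpos. lra. }
  pose proof (front_deriv_nonpos u U1 U2 Hu HU1 Hu01 Hu_left Hu_right HU2_bounded gc G HG c0 r1
    HU2 Hc0 HG0 HG_nonpos (Hgc_pos Hgap)) as HU1_nonpos.
  pose proof (front_deriv_neg u U1 U2 Hu HU1 Hu01 Hu_left Hu_right HU2_bounded gc G HG c0 r1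
    HU2 Hc0 HG0 HG_nonpos (Hgc_pos Hgap)) as HU1_neg.
  destruct (front_inverse u U1 Hu Hu01 Hu_left Hu_right HU1_nonpos HU1_neg) as [Y [HY HY_deriv]].
  exact (phase_plane_contradiction w W1 W2 u U1 U2 Y gc h c c0 r1 Hw HW1 Hw01 Hw_left Hw_right
    Hw_dec HW2_bounded Hu HU1 Hu01 HU2_bounded HU1_neg HY HY_deriv Hh HW2 HU2 Hr1
    Hgc_nonpos (Hgc_nonneg Hgap) Hc0c).
Qed.

(* Extended through clamp01 so that the primitive is differentiable at 0 and 1 as well. *)
Definition reaction (f0 : R -> R) (s : R) : R := s * (1 - s - f0 (clamp01 s)).
Definition potential (f0 : R -> R) (s : R) : R := RInt (reaction f0) 0 s.

Section Reaction.

Variables (f0 : R -> R) (r1 : R).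
Hypothesis Hf0 : continuity (fun s => f0 (clamp01 s)).
Hypothesis Hf00 : f0 0 > 1.
Hypothesis Hf01 : f0 1 = 0.
Hypothesis Hr1 : 0 < r1 < 1.
Hypothesis Hr1_root : 1 - r1 = f0 r1.
Hypothesis Hr1_unique : forall s, 0 < s < 1 -> 1 - s = f0 s -> s = r1.

Lemma reaction_eq s : 0 <= s <= 1 -> reaction f0 s = s * (1 - s - f0 s).
Proof. intros Hs. unfold reaction. rewrite clamp01_id; auto. Qed.

Lemma continuity_reaction : continuity (reaction f0).
Proof.
  intro s. apply continuity_pt_mult; [apply derivable_continuous_pt, derivable_pt_id|].
  apply continuity_pt_minus; [|apply Hf0].
  apply continuity_pt_minus; [apply continuity_pt_const; now intros ? ?|].
  apply derivable_continuous_pt, derivable_pt_id.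
Qed.

Lemma derivable_pt_lim_potential s : derivable_pt_lim (potential f0) s (reaction f0 s).
Proof.
  apply is_derive_Reals, (is_derive_RInt (reaction f0) (potential f0) 0 s).
  - apply filter_forall. intros b. apply (@RInt_correct R_CompleteNormedModule).
    apply (@ex_RInt_continuous R_CompleteNormedModule). intros z _.
    apply continuity_pt_filterlim, continuity_reaction.
  - apply continuity_pt_filterlim, continuity_reaction.
Qed.

Lemma potential_0 : potential f0 0 = 0.
Proof. apply (@RInt_point R_CompleteNormedModule). Qed.

Lemma slack_continuous s : continuity_pt (fun s => 1 - s - f0 (clamp01 s)) s.
Proof.
  apply continuity_pt_minus; [|apply Hf0].
  apply continuity_pt_minus; [apply continuity_pt_const; now intros ? ?|].
  apply derivable_continuous_pt, derivable_pt_id.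
Qed.

Lemma slack_no_sign_change a b : 0 <= a < b -> b < 1 -> b < r1 \/ r1 < a ->
  (1 - a - f0 a) * (1 - b - f0 b) < 0 -> False.
Proof.
  intros Hab Hb Hside Hsign.
  set (k := fun s => 1 - s - f0 (clamp01 s)).
  assert (Hk : forall s, 0 <= s <= 1 -> k s = 1 - s - f0 s)
    by (intros s Hs; unfold k; rewrite clamp01_id; auto).
  assert (Hroot : exists t, a <= t <= b /\ k t = 0).
  { rewrite <- (Hk a), <- (Hk b) in Hsign by lra.
    destruct (Rlt_or_le (k a) 0) as [Ha|Ha].
    - apply IVT_incr; [lra|intros; apply slack_continuous|lra|nra].
    - assert (0 < k a) by (destruct Ha as [|E]; [lra|rewrite <- E in Hsign; lra]).
      apply IVT_decr; [lra|intros; apply slack_continuous|lra|nra]. }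
  destruct Hroot as [t [Ht Hkt]]. rewrite Hk in Hkt by lra.
  assert (t <> 0) by (intros ->; lra).
  pose proof (Hr1_unique t ltac:(lra) ltac:(lra)). lra.
Qed.

Lemma slack_neg_below_root s : 0 <= s < r1 -> 1 - s - f0 s < 0.
Proof.
  intros Hs. destruct (Req_dec s 0) as [->|Hs0]; [lra|].
  destruct (Rlt_or_le (1 - s - f0 s) 0) as [|Hk]; [assumption|exfalso].
  assert (1 - s - f0 s <> 0) by (intro; pose proof (Hr1_unique s ltac:(lra) ltac:(lra)); lra).
  apply (slack_no_sign_change 0 s); [lra|lra|left; lra|nra].
Qed.

Lemma reaction_nonpos_below_root s : 0 <= s <= r1 -> reaction f0 s <= 0.
Proof.
  intros Hs. rewrite reaction_eq by lra. destruct (Req_dec s r1) as [->|]; [nra|].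
  pose proof (slack_neg_below_root s ltac:(lra)). nra.
Qed.

Lemma reaction_pos_above_root_of_gap :
  potential f0 0 < potential f0 1 -> forall s, r1 < s < 1 -> 0 < reaction f0 s.
Proof.
  intros Hgap s Hs. rewrite reaction_eq by lra.
  destruct (Rlt_or_le 0 (1 - s - f0 s)) as [|Hk]; [nra|exfalso].
  assert (Hneg : 1 - s - f0 s < 0)
    by (destruct Hk as [|Hk]; [assumption|pose proof (Hr1_unique s ltac:(lra) ltac:(lra)); lra]).
  (* then the slack is nonpositive on all of (r1, 1), so the potential decreases on [0, 1] *)
  assert (Hall : forall s', r1 < s' < 1 -> 1 - s' - f0 s' <= 0).
  { intros s' Hs'. destruct (Rle_or_lt (1 - s' - f0 s') 0) as [|Hpos]; [assumption|exfalso].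
    destruct (Rlt_or_le s s') as [Hlt|Hle].
    - apply (slack_no_sign_change s s'); [lra|lra|right; lra|nra].
    - assert (s' < s) by (destruct (Req_dec s' s) as [->|]; lra).
      apply (slack_no_sign_change s' s); [lra|lra|right; lra|nra]. }
  assert (Hreact : forall s', 0 <= s' <= 1 -> reaction f0 s' <= 0).
  { intros s' Hs'. destruct (Rle_or_lt s' r1); [apply reaction_nonpos_below_root; lra|].
    rewrite reaction_eq by lra. destruct (Req_dec s' 1) as [->|]; [rewrite Hf01; lra|].
    pose proof (Hall s' ltac:(lra)). nra. }
  assert (potential f0 1 <= potential f0 (r1 / 2)).
  { apply (derive_nonpos_interv _ (reaction f0)); [lra|intros; apply derivable_pt_lim_potential|].
    intros; apply Hreact; lra. }
  assert (potential f0 (r1 / 2) < potential f0 (r1 / 4)).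
  { apply (derive_neg_interv _ (reaction f0)); [lra|intros; apply derivable_pt_lim_potential|].
    intros x Hx. rewrite reaction_eq by lra. pose proof (slack_neg_below_root x ltac:(lra)). nra. }
  assert (potential f0 (r1 / 4) <= potential f0 0).
  { apply (derive_nonpos_interv _ (reaction f0)); [lra|intros; apply derivable_pt_lim_potential|].
    intros; apply Hreact; lra. }
  lra.
Qed.

Lemma reaction_nonneg_above_root_of_gap :
  potential f0 0 < potential f0 1 -> forall s, r1 <= s <= 1 -> 0 <= reaction f0 s.
Proof.
  intros Hgap s Hs. destruct (Req_dec s r1) as [->|]; [rewrite reaction_eq, <- Hr1_root by lra; lra|].
  destruct (Req_dec s 1) as [->|]; [rewrite reaction_eq, Hf01 by lra; lra|].
  left. apply reaction_pos_above_root_of_gap; [assumption|lra].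
Qed.

End Reaction.

Lemma delayed_reaction_excess_nonneg (f f0 w : R -> R) d :
  0 <= d -> decreasing w -> (forall x, 0 <= w x <= 1) ->
  (forall s t, 0 <= s -> s <= t -> t <= 1 -> f0 t <= f0 s) ->
  (forall s, 0 <= s <= 1 -> f0 s <= f s) ->
  forall x, 0 <= w x * (f (w (x + d)) - f0 (w x)).
Proof.
  intros Hd Hdec Hw01 Hf0dec Hf0f x.
  pose proof (Hw01 x). pose proof (Hw01 (x + d)).
  assert (w (x + d) <= w x) by (apply Hdec; lra).
  assert (f0 (w x) <= f0 (w (x + d))) by (apply Hf0dec; lra).
  assert (f0 (w (x + d)) <= f (w (x + d))) by (apply Hf0f; lra).
  apply Rmult_le_pos; lra.
Qed.

Theorem lemma4p1
  (f f1 f2 f3 f4 : R -> R)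
  (Hd1 : forall x, derivable_pt_lim f x (f1 x))
  (Hd2 : forall x, derivable_pt_lim f1 x (f2 x))
  (Hd3 : forall x, derivable_pt_lim f2 x (f3 x))
  (Hd4 : forall x, derivable_pt_lim f3 x (f4 x))
  (Hc4 : continuity f4)
  (Hb1 : bounded_fun f1) (Hb2 : bounded_fun f2)
  (Hb3 : bounded_fun f3) (Hb4 : bounded_fun f4)
  (HF1a : forall w, 0 <= w < 1 -> f w > 0)
  (HF1b : f 1 = 0)
  (HF1c : f1 1 > -1)
  (HF2a : f 0 > 1)
  (HF2b : f1 0 > 0)
  (HF2c : exists wstar, 0 < wstar < 1 /\ forall w, 0 <= w < wstar -> f w > 1)
  (HF3 : exists w0, 0 < w0 < 1 /\ f w0 = 1 - w0 /\
           (forall w, 0 < w < 1 -> f w = 1 - w -> w = w0) /\ f1 w0 < -1)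
  (f0 : R -> R)
  (Hf0C1 : C1_on_01 f0)
  (Hf0mon : forall u v, 0 <= u -> u <= v -> v <= 1 -> f0 v <= f0 u)
  (Hf0le : forall w, 0 <= w <= 1 -> f0 w <= f w)
  (Hf00 : f0 0 > 1)
  (Hf01 : f0 1 = 0)
  (Hf0root : exists w1, 0 < w1 < 1 /\ 1 - w1 = f0 w1 /\
               forall w, 0 < w < 1 -> 1 - w = f0 w -> w = w1)
  (c0 : R)
  (Hc0ex : exists w, solves_nondelayed f0 c0 w)
  (Hc0uniq : forall c' w, solves_nondelayed f0 c' w -> c' = c0)
  (tau c : R) (Htau : 0 <= tau) (Hc : c > 0)
  (w : R -> R) (Hw : solves_P f tau c w)
  (Hwmon : forall x y, x <= y -> w y <= w x) :
  c <= c0.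
Proof.
  destruct Hf0root as [r1 [Hr1 [Hr1_root Hr1_unique]]].
  destruct Hc0ex as [u [U1 [U2 [[Hu [HU1 _]] [Hu01 [Hode_u [Hu_left Hu_right]]]]]]].
  destruct Hw as [W1 [W2 [[Hw [HW1 _]] [Hode_w [Hw_left Hw_right]]]]].
  pose proof (C1_on_01_continuity_clamp01 f0 Hf0C1) as Hf0.
  pose proof (decreasing_front_in_01 w Hwmon Hw_left Hw_right) as Hw01.
  destruct (continuity_bounded_01 f (fun x _ => derivable_continuous_pt f x (exist _ _ (Hd1 x))))
    as [Mf HMf].
  destruct (continuity_bounded_01 (fun s => f0 (clamp01 s)) (fun x _ => Hf0 x)) as [Mf0 HMf0].
  assert (HW2_bounded : bounded_fun W2).
  { apply (bounded_second_deriv_of_ode w W1 W2 (fun x => f (w (x + c * tau))) c); auto.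
    exists Mf. intro x. apply HMf, Hw01. }
  assert (HU2_bounded : bounded_fun U2).
  { apply (bounded_second_deriv_of_ode u U1 U2 (fun x => f0 (u x)) c0); auto.
    exists Mf0. intro x. specialize (HMf0 (u x) (Hu01 x)).
    rewrite clamp01_id in HMf0 by apply Hu01. exact HMf0. }
  pose proof (delayed_reaction_excess_nonneg f f0 w (c * tau) ltac:(nra) Hwmon Hw01 Hf0mon Hf0le) as Hh.
  apply (front_speed_le w W1 W2 u U1 U2 (reaction f0) (potential f0)
    (fun x => w x * (f (w (x + c * tau)) - f0 (w x))) c c0 r1); auto.
  - apply derivable_pt_lim_potential, Hf0.
  - apply potential_0.
  - apply reaction_nonpos_below_root; auto.
  - apply reaction_nonneg_above_root_of_gap; auto.
  - apply reaction_pos_above_root_of_gap; auto.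
  - intro x. rewrite reaction_eq by apply Hw01. pose proof (Hode_w x). lra.
  - intro x. rewrite reaction_eq by apply Hu01. pose proof (Hode_u x). lra.
Qed.
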